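(* Let $\mathcal{M}\subseteq\mathbb{F}_{q^n}^{2\times2}$ be a matrix field isomorphic to $\mathbb{F}_{q^t}$, where $1\le t\le n$ and $t$ divides $n$. If $\mathcal{M}$ contains a nonsingular matrix, then there exist $P\in\mathrm{GL}(2,q^n)$ and $\sigma\in\mathrm{Aut}(\mathbb{F}_{q^t})$ such that \[P\mathcal{M}P^{-1}=\left\{\begin{pmatrix}x&0\\0&x^\sigma\end{pmatrix}\colon x\in\mathbb{F}_{q^t}\right\}.\] In addition, if $\mathrm{diag}(x,x)\in\mathcal{M}$ for every $x\in\mathbb{F}_q$, then $\sigma\in\mathrm{Gal}(\mathbb{F}_{q^t}|\mathbb{F}_q)$.
   Context: $q$ is a prime power and $n\ge1$. A matrix field in $\mathbb{F}_{q^n}^{2\times2}$ is a subset which is a field with respect to the matrix addition and multiplication inherited from $\mathbb{F}_{q^n}^{2\times2}$ (its identity element need not be the identity matrix). *)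

From HB Require Import structures.
From mathcomp Require Import all_boot all_order all_algebra.
Set Implicit Arguments. Unset Strict Implicit. Unset Printing Implicit Defensive.
Import GRing.Theory.
Local Open Scope ring_scope.

Definition prime_power (q : nat) : Prop :=
  exists p k : nat, prime p /\ (0 < k)%N /\ q = (p ^ k)%N.

(* The subfield F_{q^t} of a finite field L (containing it): {x | x^(q^t) = x}. *)
Definition subGF (L : finFieldType) (q t : nat) : {set L} :=
  [set x : L | x ^+ (q ^ t) == x].

(* A matrix field: a subset of 2x2 matrices that is a field for the inherited
   matrix addition and multiplication (identity need not be the identity matrix).
   The additive identity of an additive subgroup is necessarily the zero matrix. *)
Definition matrix_field (L : finFieldType) (S : {set 'M[L]_2}) : Prop :=
  [/\ [/\ 0 \in S,
      {in S & S, forall A B, A + B \in S} &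
      {in S, forall A, - A \in S}],
      {in S & S, forall A B, A * B \in S},
      {in S & S, forall A B, A * B = B * A} &
      (exists e, [/\ e \in S, e != 0,
        (forall A, A \in S -> e * A = A /\ A * e = A) &
        (forall A, A \in S -> A != 0 -> exists2 B, B \in S & A * B = e)])].

Definition field_iso_onto (L : finFieldType) (K : {set L}) (S : {set 'M[L]_2}) : Prop :=
  exists f : L -> 'M[L]_2,
    [/\ {in K & K, forall x y, f (x + y) = f x + f y},
        {in K & K, forall x y, f (x * y) = f x * f y},
        {in K & K, injective f} &
        f @: K = S].

Definition field_aut_on (L : finFieldType) (K : {set L}) (sigma : L -> L) : Prop :=
  [/\ [/\ {in K, forall x, sigma x \in K},
      {in K & K, injective sigma} &
      K \subset sigma @: K],
      {in K & K, forall x y, sigma (x + y) = sigma x + sigma y} &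
      {in K & K, forall x y, sigma (x * y) = sigma x * sigma y}].

Definition diag2 (L : finFieldType) (x y : L) : 'M[L]_2 :=
  \matrix_(i < 2, j < 2) (if i == j then (if (i : nat) == 0%N then x else y) else 0).

(* Every element A of the matrix field satisfies A^(q^n) = A, and the field is
   commutative, so it is simultaneously diagonalisable: after a conjugation its
   elements are diag(g1 x, g2 x) for x in F_{q^t}.  A nonsingular element forces
   the identity of the matrix field to be the identity matrix, so g1 and g2 are
   unital ring embeddings of F_{q^t} into itself, hence automorphisms, and
   sigma = g2 o g1^-1.  Scalar matrices are unchanged by conjugation, so sigma
   fixes every x in F_q whose scalar matrix lies in the field. *)

From HB Require Import structures.
From mathcomp Require Import all_boot all_order all_algebra all_field.
Set Implicit Arguments.
Unset Strict Implicit.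
Unset Printing Implicit Defensive.
Import GRing.Theory.
Local Open Scope ring_scope.

Definition ring_morph_on (L : finFieldType) (R : pzRingType) (K : {set L})
    (h : L -> R) : Prop :=
  [/\ {in K & K, forall x y, h (x + y) = h x + h y},
      {in K & K, forall x y, h (x * y) = h x * h y} & h 1 = 1].

Lemma prime_power_pchar_nat (L : finFieldType) (q n : nat) :
  prime_power q -> #|L| = (q ^ n)%N -> [pchar L].-nat q.
Proof.
move=> [p [k [p_pr [k_gt0 ->]]]] cardL.
have pL : p \in [pchar L].
  by apply: (@card_finPcharP _ p (k * n)); rewrite // cardL expnM.
by rewrite (eq_pnat _ (pcharf_eq pL)) pnatX pnat_id.
Qed.

Section SubGF.
Variables (L : finFieldType) (q t : nat).
Hypothesis pcharQ : [pchar L].-nat (q ^ t)%N.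
Local Notation K := (subGF L q t).

Lemma in_subGF x : (x \in K) = (x ^+ (q ^ t) == x).
Proof. by rewrite inE. Qed.

Lemma subGF1 : 1 \in K. Proof. by rewrite in_subGF expr1n. Qed.

Lemma subGFD x y : x \in K -> y \in K -> x + y \in K.
Proof. by rewrite !in_subGF => /eqP xK /eqP yK; rewrite exprDn_pchar // xK yK. Qed.

Lemma subGFN x : x \in K -> - x \in K.
Proof. by rewrite !in_subGF => /eqP xK; rewrite exprNn_pchar // xK. Qed.

Lemma subGFM x y : x \in K -> y \in K -> x * y \in K.
Proof. by rewrite !in_subGF => /eqP xK /eqP yK; rewrite exprMn xK yK. Qed.

Lemma subGFV x : x \in K -> x^-1 \in K.
Proof. by rewrite !in_subGF => /eqP xK; rewrite exprVn xK. Qed.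

Lemma subGFX x m : x \in K -> x ^+ m \in K.
Proof. by rewrite !in_subGF => /eqP xK; rewrite exprAC xK. Qed.

Lemma ring_morph_onX (R : pzRingType) (h : L -> R) :
  ring_morph_on K h -> {in K, forall x m, h (x ^+ m) = h x ^+ m}.
Proof.
case=> _ hM h1 x xK; elim=> [|m IHm]; first by rewrite !expr0.
by rewrite exprS hM ?subGFX // IHm -exprS.
Qed.

Lemma unit_ring_morph_on (R : unitRingType) (f : L -> R) :
  {in K & K, forall x y, f (x + y) = f x + f y} ->
  {in K & K, forall x y, f (x * y) = f x * f y} ->
  (exists2 a, a \in K & f a \is a GRing.unit) -> ring_morph_on K f.
Proof.
move=> fD fM [a aK fa_unit]; split=> //.
by apply: (mulIr fa_unit); rewrite -fM ?subGF1 // !mul1r.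
Qed.

Section SelfMorphism.
Variable h : L -> L.
Hypothesis h_morph : ring_morph_on K h.

Lemma ring_morph_on_subGF : {in K, forall x, h x \in K}.
Proof.
move=> x xK; rewrite in_subGF -(ring_morph_onX h_morph xK).
by move: xK; rewrite in_subGF => /eqP ->.
Qed.

Lemma ring_morph_on_inj : {in K &, injective h}.
Proof.
case: h_morph => hD hM h1 x y xK yK hxy; apply/eqP; rewrite -subr_eq0.
have dK : x - y \in K by rewrite subGFD ?subGFN.
have hd0 : h (x - y) = 0.
  by apply: (addIr (h y)); rewrite -hD // subrK add0r.
apply/contraT => d_neq0; have := hM _ _ dK (subGFV dK).
by rewrite divff // h1 hd0 mul0r => /eqP; rewrite oner_eq0.
Qed.

Lemma ring_morph_on_onto : h @: K = K.
Proof.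
apply/eqP; rewrite eqEcard card_in_imset ?leqnn ?andbT; last first.
  exact: ring_morph_on_inj.
by apply/subsetP => _ /imsetP [x xK ->]; apply: ring_morph_on_subGF.
Qed.

Lemma ring_morph_on_aut : field_aut_on K h.
Proof.
case: (h_morph) => hD hM _; split=> //; split.
- exact: ring_morph_on_subGF.
- exact: ring_morph_on_inj.
- by rewrite ring_morph_on_onto.
Qed.

Lemma ring_morph_on_inverse :
  exists h', [/\ ring_morph_on K h', {in K, cancel h h'} & {in K, cancel h' h}].
Proof.
pose h' y := odflt y [pick x in K | h x == y].
have h'K : {in K, forall y, h' y \in K /\ h (h' y) = y}.
  move=> y; rewrite -{1}ring_morph_on_onto => /imsetP [x0 x0K ->]; rewrite /h'.
  by case: pickP => [x /andP [xK /eqP]|/(_ x0)] //=; rewrite x0K eqxx.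
have h'h : {in K, cancel h' h} by move=> y /h'K [].
have hh' : {in K, cancel h h'}.
  move=> x xK; have [h'hxK hh'hx] := h'K _ (ring_morph_on_subGF xK).
  exact: ring_morph_on_inj hh'hx.
case: h_morph => hD hM h1; exists h'; split=> //; split=> [y z yK zK|y z yK zK|].
- have [[h'yK _] [h'zK _]] := (h'K _ yK, h'K _ zK).
  by rewrite -{1}[y]h'h // -{1}[z]h'h // -hD // hh' // subGFD.
- have [[h'yK _] [h'zK _]] := (h'K _ yK, h'K _ zK).
  by rewrite -{1}[y]h'h // -{1}[z]h'h // -hM // hh' // subGFM.
- by rewrite -{1}h1 hh' // subGF1.
Qed.

End SelfMorphism.

Lemma ring_morph_on_comp (R : pzRingType) (h : L -> L) (g : L -> R) :
  ring_morph_on K h -> ring_morph_on K g -> ring_morph_on K (g \o h).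
Proof.
move=> h_morph [gD gM g1]; have hK := ring_morph_on_subGF h_morph.
case: h_morph => hD hM h1; split=> [x y xK yK|x y xK yK|] /=.
- by rewrite hD // gD ?hK.
- by rewrite hM // gM ?hK.
- by rewrite h1 g1.
Qed.

End SubGF.

Lemma expcard_comm_codiag (F : finFieldType) n (S : {set 'M[F]_n.+1}) :
  {in S, forall A, A ^+ #|F| = A} -> {in S & S, forall A B, A * B = B * A} ->
  exists2 P : 'M[F]_n.+1, P \in unitmx &
    {in S, forall A, is_diag_mx (P *m A *m invmx P)}.
Proof.
move=> SX SC; have [] := (@codiagonalizableP _ _ (enum S)).1.
  split=> [A B|A]; rewrite ?mem_enum => AS.
    by move=> BS; rewrite /comm_mx !mulmxE SC.
  apply/diagonalizableP; exists (enum F); first exact: enum_uniq.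
  apply: mxminpoly_min.
  rewrite big_enum /= -finField_genPoly rmorphB /= rmorphXn /= horner_mx_X.
  by rewrite SX // subrr.
move=> P P_unit /allP P_diag; exists P => // A AS.
have := P_diag A; rewrite mem_enum /= => /(_ AS).
by rewrite /similar_to conjumx.
Qed.

Lemma ring_morph_on_conj (L : finFieldType) (K : {set L}) n
    (f : L -> 'M[L]_n.+1) (P : 'M[L]_n.+1) :
  P \in unitmx -> ring_morph_on K f ->
  ring_morph_on K (fun x => P *m f x *m invmx P).
Proof.
move=> P_unit [fD fM f1]; split=> [x y xK yK|x y xK yK|] /=.
- by rewrite fD // mulmxDr mulmxDl.
- by rewrite fM // -!mulmxE !mulmxA (mulmxKV P_unit).
- by rewrite f1 mulmx1 mulmxV.
Qed.

Lemma ring_morph_on_diag_entry (L : finFieldType) (R : nzRingType)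
    (K : {set L}) n (D : L -> 'M[R]_n.+1) (i : 'I_n.+1) :
  ring_morph_on K D -> {in K, forall x, is_diag_mx (D x)} ->
  ring_morph_on K (fun x => D x i i).
Proof.
move=> [DD DM D1] Ddiag; split=> [x y xK yK|x y xK yK|] /=.
- by rewrite DD // mxE.
- rewrite DM //; case/diag_mxP: (Ddiag y yK) => d ->.
  by rewrite -mulmxE mul_mx_diag !mxE eqxx.
- by rewrite D1 mxE eqxx.
Qed.

Section Diag2.
Variable L : finFieldType.

Lemma diag2_inj (a b c d : L) : diag2 a b = diag2 c d -> a = c /\ b = d.
Proof.
by move=> /matrixP e; split; [have := e 0 0 | have := e 1 1]; rewrite !mxE.
Qed.

Lemma diag2_scalar (a : L) : a%:M = diag2 a a.
Proof.
by apply/matrixP => i j; rewrite !mxE; case: i => [[|[|i]] ?]; case: j => [[|[|j]] ?].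
Qed.

Lemma is_diag_mx_diag2 (M : 'M[L]_2) : is_diag_mx M -> M = diag2 (M 0 0) (M 1 1).
Proof.
move/is_diag_mxP => Mdiag; apply/matrixP => i j; rewrite mxE.
case: i => [[|[|i]] ?] //; case: j => [[|[|j]] ?] //=;
  first [by rewrite Mdiag | by congr (M _ _); apply: val_inj].
Qed.

Variables (q t : nat).
Hypothesis pcharQ : [pchar L].-nat (q ^ t)%N.
Local Notation K := (subGF L q t).

Lemma diag2_ring_morph_on (D : L -> 'M[L]_2) :
  ring_morph_on K D -> {in K, forall x, is_diag_mx (D x)} ->
  exists2 sigma, field_aut_on K sigma & D @: K = [set diag2 x (sigma x) | x in K].
Proof.
move=> D_morph Ddiag; pose g1 x := D x 0 0; pose g2 x := D x 1 1.
have g1_morph : ring_morph_on K g1 by apply: ring_morph_on_diag_entry.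
have g2_morph : ring_morph_on K g2 by apply: ring_morph_on_diag_entry.
have [g1' [g1'_morph g1K g1'K]] := ring_morph_on_inverse pcharQ g1_morph.
exists (g2 \o g1').
  by apply/ring_morph_on_aut/ring_morph_on_comp.
rewrite -[in RHS](ring_morph_on_onto pcharQ g1_morph) -imset_comp.
apply: eq_in_imset => x xK /=.
by rewrite g1K // [LHS]is_diag_mx_diag2 ?Ddiag.
Qed.

End Diag2.

Theorem theorem3p13 (q n t : nat) (L : finFieldType) (S : {set 'M[L]_2}) :
  prime_power q -> (1 <= n)%N -> #|L| = (q ^ n)%N ->
  (1 <= t)%N -> (t <= n)%N -> (t %| n)%N ->
  matrix_field S ->
  field_iso_onto (subGF L q t) S ->
  (exists2 A, A \in S & A \in unitmx) ->
  exists P : 'M[L]_2, exists sigma : L -> L,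
    [/\ P \in unitmx,
        field_aut_on (subGF L q t) sigma,
        [set P *m A *m invmx P | A in S] = [set diag2 x (sigma x) | x in subGF L q t] &
        ((forall x : L, x ^+ q = x -> x%:M \in S) ->
          forall x : L, x \in subGF L q t -> x ^+ q = x -> sigma x = x)].
Proof.
move=> q_pp _ cardL _ _ _ [_ _ SC _] [f [fD fM _ fS]] [A0 A0S A0_unit].
have pcharQ : [pchar L].-nat (q ^ t)%N.
  by rewrite pnatX (prime_power_pchar_nat q_pp cardL).
have f_morph : ring_morph_on (subGF L q t) f.
  apply: unit_ring_morph_on => //.
  by move: A0S A0_unit; rewrite -fS => /imsetP [a aK ->]; exists a.
have SX : {in S, forall A, A ^+ #|L| = A}.
  by rewrite -fS => _ /imsetP [x xK ->]; rewrite -(ring_morph_onX f_morph xK) expf_card.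
have [P P_unit Pdiag] := expcard_comm_codiag SX SC.
have [|sigma sigma_aut DS] :=
  diag2_ring_morph_on pcharQ (ring_morph_on_conj P_unit f_morph).
  by move=> x xK; apply: Pdiag; rewrite -fS imset_f.
have PSP : [set P *m A *m invmx P | A in S] = [set diag2 x (sigma x) | x in subGF L q t].
  by rewrite -DS -fS -imset_comp.
exists P, sigma; split=> // Fq_in_S x _ xq.
have : P *m x%:M *m invmx P \in [set P *m A *m invmx P | A in S] by apply/imset_f/Fq_in_S.
rewrite PSP scalar_mxC -mulmxA mulmxV // mulmx1 diag2_scalar.
by case/imsetP => y _ /diag2_inj [<- /esym].
Qed.
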